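(* Let $M\subset\mathcal P(\Omega_1)$, $N\subset\mathcal P(\Omega_2)$ be submanifolds, $\varphi:M\to N$ and $\psi:N\to M$ Markov maps with $\psi\circ\varphi=\mathrm{id}_M$, and $p\in M$, $q\in N$ with $q=\varphi(p)$, $p=\psi(q)$. Then the Fisher metrics satisfy $$g_{M,p}(X_p,\psi_{*,q}Y_q)=g_{N,q}(\varphi_{*,p}X_p,Y_q)\quad\forall X_p\in T_p(M),\ Y_q\in T_q(N),$$ i.e. $\psi_{*,q}=(\varphi_{*,p})^\dagger$ (adjoint with respect to $g_{M,p}$ and $g_{N,q}$). Equivalently, for the Fisher co-metrics, $g_{M,p}(\alpha_p,\varphi^*_p\beta_q)=g_{N,q}(\psi^*_q\alpha_p,\beta_q)$ for all $\alpha_p\in T^*_p(M)$, $\beta_q\in T_q^*(N)$. Moreover $(\psi_{*,q})^\dagger\circ\psi_{*,q}=\varphi_{*,p}\circ\psi_{*,q}$ is the orthogonal projector of $T_q(N)$ onto $\varphi_{*,p}(T_p(M))$.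
   Context: $\mathcal P(\Omega)$ is the manifold of strictly positive probability distributions on a finite set $\Omega$. A Markov map $\mathcal P(\Omega_1)\to\mathcal P(\Omega_2)$ is a map $p\mapsto\sum_xW(\cdot|x)p(x)$ for a channel $W$ with $\forall y\,\exists x\,W(y|x)>0$; a Markov map $M\to N$ between submanifolds is the restriction to $M$ of such a map. $\varphi_{*,p}$ is the differential at $p$, $\varphi^*_p$ its transpose. The Fisher metric on $\mathcal P(\Omega)$ is $g_p(X,Y)=\sum_\omega X^{(m)}(\omega)Y^{(m)}(\omega)/p(\omega)$ with $X^{(m)}$ the m-representation (identification of $T_p(\mathcal P(\Omega))$ with $\{B:\sum B=0\}$); $g_M,g_N$ are its restrictions, and the same symbols denote the dual inner products on cotangent spaces (Fisher co-metrics). *)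

From HB Require Import structures.
From mathcomp Require Import all_boot all_order all_algebra.
From mathcomp Require Import all_classical all_reals all_analysis.
Set Implicit Arguments. Unset Strict Implicit. Unset Printing Implicit Defensive.
Import Order.TTheory GRing.Theory Num.Theory.
Import numFieldNormedType.Exports.
Local Open Scope classical_set_scope.
Local Open Scope ring_scope.

(* Omega = 'I_n; a (signed) measure / tangent vector in m-representation is a
   column vector 'cV[R]_n, its value at omega being  X omega 0. *)

Section Defs.
Variable R : realType.

Definition simplex (n : nat) : set 'cV[R]_n :=
  [set p | (forall i, 0 < p i 0) /\ \sum_i p i 0 = 1].

(* channel W(y|x) = W y x, y in Omega2, x in Omega1, with every y reachable *)
Definition markov_channel (n1 n2 : nat) (W : 'M[R]_(n2, n1)) : Prop :=
  (forall y x, 0 <= W y x) /\ (forall x, \sum_y W y x = 1) /\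
  (forall y, exists x, 0 < W y x).

Definition markov_map (n1 n2 : nat) (M : set 'cV[R]_n1) (N : set 'cV[R]_n2)
  (W : 'M[R]_(n2, n1)) : Prop :=
  markov_channel W /\ (forall p, M p -> N (W *m p)).

Definition iter_dir (k n : nat) (vs : seq 'cV[R]_k) (f : 'cV[R]_k -> 'cV[R]_n)
  : 'cV[R]_k -> 'cV[R]_n :=
  foldr (fun v g => fun x => derive g x v) f vs.

Definition smooth_on (k n : nat) (U : set 'cV[R]_k) (f : 'cV[R]_k -> 'cV[R]_n)
  : Prop :=
  (forall vs v x, U x -> derivable (iter_dir vs f) x v) /\
  (forall vs, {within U, continuous (iter_dir vs f)}).

(* embedded smooth submanifold of P(Omega) (= embedded submanifold of R^Omega
   contained in P(Omega)): every point has a local smooth parametrization which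
   is an injective immersion and a homeomorphism onto an open piece of M *)
Definition submanifold (n : nat) (M : set 'cV[R]_n) : Prop :=
  M `<=` @simplex n /\
  forall p, M p ->
    exists k (U : set 'cV[R]_k) (f : 'cV[R]_k -> 'cV[R]_n) (V : set 'cV[R]_n),
      [/\ open U, open V, V p, (f @` U = M `&` V) & smooth_on U f] /\
      [/\ (forall x v, U x -> derive f x v = 0 -> v = 0),
          (forall x y, U x -> U y -> f x = f y -> x = y) &
          (forall x, U x -> forall e : R, 0 < e ->
              exists2 d : R, 0 < d &
                forall y, U y -> `|f y - f x| < d -> `|y - x| < e)].

Definition tangent (n : nat) (M : set 'cV[R]_n) (p : 'cV[R]_n) : set 'cV[R]_n :=
  [set X | exists g : R -> 'cV[R]_n,
     [/\ g 0 = p, \forall t \near (0 : R), M (g t),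
         derivable g 0 1 & derive g 0 1 = X]].

Definition markov_push (n1 n2 : nat) (W : 'M[R]_(n2, n1)) (X : 'cV[R]_n1)
  : 'cV[R]_n2 := W *m X.

Definition fisher (n : nat) (p X Y : 'cV[R]_n) : R :=
  \sum_i X i 0 * Y i 0 / p i 0.

(* X in T_p(M) is the g_{M,p}-dual (Riesz) vector of the covector alpha on
   T_p(M); the Fisher co-metric is g(alpha, beta) = g(X_alpha, X_beta). *)
Definition dual_vec (n : nat) (M : set 'cV[R]_n) (p : 'cV[R]_n)
  (alpha : 'cV[R]_n -> R) (X : 'cV[R]_n) : Prop :=
  tangent M p X /\ forall Z, tangent M p Z -> alpha Z = fisher p X Z.

Definition orth_projector (n : nat) (g : 'cV[R]_n -> 'cV[R]_n -> R)
  (T S : set 'cV[R]_n) (P : 'cV[R]_n -> 'cV[R]_n) : Prop :=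
  [/\ forall Y, T Y -> S (P Y),
      forall Z, S Z -> P Z = Z &
      forall Y Z, T Y -> S Z -> g (Y - P Y) Z = 0].

End Defs.

From HB Require Import structures.
From mathcomp Require Import all_boot all_order all_algebra.
From mathcomp Require Import all_classical all_reals all_analysis.
From mathcomp Require Import ring lra.
Import Order.TTheory GRing.Theory Num.Theory.
Import numFieldNormedType.Exports.
Local Open Scope classical_set_scope.
Local Open Scope ring_scope.

(* The Fisher metric is monotone under Markov maps: g_{Wq}(WZ, WZ) <= g_q(Z, Z)
   (Cauchy-Schwarz in each output coordinate).  Applied to phi and to psi, with
   psi o phi = id on T_p(M), this makes phi_{*,p} an isometry, so X |-> g_p(X, X)
   and Y |-> g_q(Y, Y) agree along phi_{*,p}.  Perturbing phi_{*,p} X by t Y and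
   using monotonicity of psi once more gives a quadratic in t that is nonnegative
   and vanishes at t = 0, so its linear coefficient
   g_q(phi_{*,p} X, Y) - g_p(X, psi_{*,q} Y) is zero. *)

Section FisherMetric.
Variable R : realType.

Lemma fisherC n (p X Y : 'cV[R]_n) : fisher p X Y = fisher p Y X.
Proof. by apply: eq_bigr => i _; rewrite (mulrC (X i 0)). Qed.

Lemma fisherBl n (p X Y Z : 'cV[R]_n) :
  fisher p (X - Y) Z = fisher p X Z - fisher p Y Z.
Proof. by rewrite /fisher -sumrB; apply: eq_bigr => i _; rewrite !mxE; ring. Qed.

Lemma fisher_sqrDZ n (p X Y : 'cV[R]_n) (t : R) :
  fisher p (X + t *: Y) (X + t *: Y) =
  fisher p X X + 2 * t * fisher p X Y + t ^+ 2 * fisher p Y Y.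
Proof.
rewrite /fisher !mulr_sumr -!big_split /=.
by apply: eq_bigr => i _; rewrite !mxE; ring.
Qed.

Lemma sqr_wsum_div_le (I : finType) (w q z : I -> R) :
  (forall i, 0 <= w i) -> (forall i, 0 < q i) -> 0 < \sum_i w i * q i ->
  (\sum_i w i * z i) ^+ 2 / (\sum_i w i * q i) <=
  \sum_i w i * (z i ^+ 2 / q i).
Proof.
move=> w0 q0 P0; set m := \sum_i _ * z i; set P := \sum_i _ * q i.
set c := m / P; have hP : P != 0 by rewrite gt_eqF.
have : 0 <= \sum_i w i * q i * (z i / q i - c) ^+ 2.
  apply: sumr_ge0 => i _; apply: mulr_ge0; last exact: sqr_ge0.
  by apply: mulr_ge0; [exact: w0 | exact: ltW].
have -> : \sum_i w i * q i * (z i / q i - c) ^+ 2 =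
    \sum_i w i * (z i ^+ 2 / q i) - 2 * c * m + c ^+ 2 * P.
  rewrite /m /P !mulr_sumr -sumrB -big_split /=; apply: eq_bigr => i _.
  by have := q0 i; rewrite lt0r => /andP[qi0 _]; field.
have -> : 2 * c * m = 2 * (m ^+ 2 / P) by rewrite /c; field.
have -> : c ^+ 2 * P = m ^+ 2 / P by rewrite /c; field.
by rewrite -addrA mulr2n mulrDl mul1r opprD addrNK subr_ge0.
Qed.

Lemma fisher_mulmx_le n1 n2 (W : 'M[R]_(n2, n1)) (q Z : 'cV[R]_n1) :
  (forall y x, 0 <= W y x) -> (forall x, \sum_y W y x = 1) ->
  (forall i, 0 < q i 0) -> (forall y, 0 < (W *m q) y 0) ->
  fisher (W *m q) (W *m Z) (W *m Z) <= fisher q Z Z.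
Proof.
move=> W0 W1 q0 Wq0; rewrite /fisher.
have coord y : (W *m Z) y 0 * (W *m Z) y 0 / (W *m q) y 0 <=
    \sum_x W y x * (Z x 0 * Z x 0 / q x 0).
  move: (Wq0 y); rewrite !mxE -expr2 => Wqy.
  under [in X in _ <= X]eq_bigr do rewrite -expr2.
  exact: sqr_wsum_div_le.
apply: le_trans (ler_sum _ (fun y _ => coord y)) _.
by rewrite exchange_big /=; apply: ler_sum => x _; rewrite -mulr_suml W1 mul1r.
Qed.

Lemma quadratic_ge0_linear_coef0 (b c : R) :
  (forall t : R, 0 <= 2 * t * b + t ^+ 2 * c) -> b = 0.
Proof.
move=> H; set s := `|c| + 1.
have s0 : 0 < s by rewrite ltr_pwDr ?normr_ge0.
have cs : c - 2 * s < 0.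
  by rewrite /s; have := ler_norm c; have := normr_ge0 c; lra.
have := H (- b / s).
have -> : 2 * (- b / s) * b + (- b / s) ^+ 2 * c = b ^+ 2 * (c - 2 * s) / s ^+ 2.
  by field; rewrite gt_eqF.
rewrite pmulr_lge0 ?invr_gt0 ?exprn_gt0 // => h.
by apply/eqP; rewrite -sqrf_eq0 eq_le sqr_ge0 andbT; nra.
Qed.

End FisherMetric.

Lemma derive_mulmx {R : realType} {n1 n2 : nat} (W : 'M[R]_(n2, n1))
    {g : R -> 'cV[R]_n1} {x v : R} :
  derivable g x v ->
  derivable (fun t => W *m g t) x v /\
  derive (fun t => W *m g t) x v = W *m derive g x v.
Proof.
move=> dg; have dgj j : derivable (fun t => g t j 0) x v.
  by move/derivable_mxP: dg; apply.
have coord i : (fun t => (W *m g t) i 0) = \sum_j (W i j \*: (fun t => g t j 0)).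
  by apply/funext => t; rewrite fct_sumE mxE.
have dWg : derivable (fun t => W *m g t) x v.
  apply/derivable_mxP => i j; rewrite ord1 coord.
  by apply: derivable_sum => k; exact: derivableZ.
split => //; rewrite derive_mx //; apply/matrixP => i j.
rewrite !mxE ord1 coord derive_sum => [|k]; last exact: derivableZ.
by rewrite (derive_mx dg); apply: eq_bigr => k _; rewrite deriveZ // mxE.
Qed.

Section MarkovMaps.
Variables (R : realType) (n1 n2 : nat).
Implicit Types (M : set 'cV[R]_n1) (N : set 'cV[R]_n2).

Lemma tangent_mulmx M N (W : 'M[R]_(n2, n1)) p X :
  (forall r, M r -> N (W *m r)) -> tangent M p X -> tangent N (W *m p) (W *m X).
Proof.
move=> MN [g [<- Mg dg <-]]; have [dWg dW] := derive_mulmx W dg.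
by exists (fun t => W *m g t); split=> //; apply: filterS Mg => t /MN.
Qed.

Lemma tangent_retraction M (W1 : 'M[R]_(n2, n1)) (W2 : 'M[R]_(n1, n2)) p X :
  (forall r, M r -> W2 *m (W1 *m r) = r) -> tangent M p X -> W2 *m (W1 *m X) = X.
Proof.
move=> ret [g [_ Mg dg <-]]; rewrite mulmxA -(derive_mulmx (W2 *m W1) dg).2.
by apply: near_eq_derive; apply: filterS Mg => t Mt; rewrite -mulmxA ret.
Qed.

Lemma fisher_markov_adjoint (W1 : 'M[R]_(n2, n1)) (W2 : 'M[R]_(n1, n2))
    (p X : 'cV[R]_n1) (q Y : 'cV[R]_n2) :
  markov_channel W1 -> markov_channel W2 ->
  (forall i, 0 < p i 0) -> (forall i, 0 < q i 0) ->
  q = W1 *m p -> p = W2 *m q -> W2 *m (W1 *m X) = X ->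
  fisher p X (W2 *m Y) = fisher q (W1 *m X) Y.
Proof.
move=> [W1_0 [W1_1 _]] [W2_0 [W2_1 _]] p0 q0 qp pq WX; set U := W1 *m X.
have contr2 Z : fisher p (W2 *m Z) (W2 *m Z) <= fisher q Z Z.
  by rewrite pq; apply: fisher_mulmx_le => //; rewrite -pq.
have isoU : fisher q U U = fisher p X X.
  apply/eqP; rewrite eq_le; apply/andP; split.
  - by rewrite qp; apply: fisher_mulmx_le => //; rewrite -qp.
  - by have := contr2 U; rewrite /U WX.
suff : fisher q U Y - fisher p X (W2 *m Y) = 0 by lra.
apply: (@quadratic_ge0_linear_coef0 _ _
  (fisher q Y Y - fisher p (W2 *m Y) (W2 *m Y))) => t.
have := contr2 (U + t *: Y).
by rewrite mulmxDr -scalemxAr WX !fisher_sqrDZ isoU; lra.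
Qed.

End MarkovMaps.

Section Adjunction.
Context {R : realType} {n1 n2 : nat} {M : set 'cV[R]_n1} {N : set 'cV[R]_n2}.
Context {W1 : 'M[R]_(n2, n1)} {W2 : 'M[R]_(n1, n2)} {p : 'cV[R]_n1} {q : 'cV[R]_n2}.
Hypothesis push1 : forall X, tangent M p X -> tangent N q (W1 *m X).
Hypothesis push2 : forall Y, tangent N q Y -> tangent M p (W2 *m Y).
Hypothesis retract : forall X, tangent M p X -> W2 *m (W1 *m X) = X.
Hypothesis adjoint : forall X Y, tangent M p X ->
  fisher p X (W2 *m Y) = fisher q (W1 *m X) Y.

Lemma cometric_adjoint (alpha : 'cV[R]_n1 -> R) (beta : 'cV[R]_n2 -> R) A C D B :
  dual_vec M p alpha A ->
  dual_vec M p (fun X => beta (W1 *m X)) C ->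
  dual_vec N q (fun Y => alpha (W2 *m Y)) D ->
  dual_vec N q beta B ->
  fisher p A C = fisher q D B.
Proof.
move=> [tA dA] [tC dC] [tD dD] [tB dB].
rewrite fisherC -dC // dB; last exact: push1.
rewrite fisherC -dD // dA; last exact: push2.
by rewrite adjoint.
Qed.

Lemma mulmx_orth_projector :
  orth_projector (fisher q) (tangent N q) ((mulmx W1) @` tangent M p)
    (fun Y => W1 *m (W2 *m Y)).
Proof.
split=> [Y tY | _ [X tX <-] | Y _ tY [X tX <-]].
- by exists (W2 *m Y) => //; exact: push2.
- by rewrite retract.
- have tY2 := push2 _ tY.
  by rewrite fisherBl fisherC -adjoint // fisherC -adjoint // retract // subrr.
Qed.

End Adjunction.

Theorem mainTheorem11 (R : realType) (n1 n2 : nat)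
  (M : set 'cV[R]_n1) (N : set 'cV[R]_n2)
  (hM : submanifold M) (hN : submanifold N)
  (W1 : 'M[R]_(n2, n1)) (W2 : 'M[R]_(n1, n2))
  (hphi : markov_map M N W1) (hpsi : markov_map N M W2)
  (hid : forall r, M r -> W2 *m (W1 *m r) = r)
  (p : 'cV[R]_n1) (q : 'cV[R]_n2) (hp : M p) (hq : N q)
  (hqp : q = W1 *m p) (hpq : p = W2 *m q) :
  (* psi_{*,q} is the adjoint of phi_{*,p} *)
  (forall X Y, tangent M p X -> tangent N q Y ->
     fisher p X (markov_push W2 Y) = fisher q (markov_push W1 X) Y) /\
  (* co-metric version: phi^*_p beta = beta o phi_{*,p},
     psi^*_q alpha = alpha o psi_{*,q} *)
  (forall (alpha : 'cV[R]_n1 -> R) (beta : 'cV[R]_n2 -> R) A C D B,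
     dual_vec M p alpha A ->
     dual_vec M p (fun X => beta (markov_push W1 X)) C ->
     dual_vec N q (fun Y => alpha (markov_push W2 Y)) D ->
     dual_vec N q beta B ->
     fisher p A C = fisher q D B) /\
  (* phi_{*,p} o psi_{*,q} is the orthogonal projector of T_q(N)
     onto phi_{*,p}(T_p(M)) *)
  orth_projector (fisher q) (tangent N q)
    (markov_push W1 @` tangent M p)
    (fun Y => markov_push W1 (markov_push W2 Y)).
Proof.
have [[subM _] [subN _]] := (hM, hN).
have [[chan1 MN] [chan2 NM]] := (hphi, hpsi).
have push1 X : tangent M p X -> tangent N q (W1 *m X).
  by rewrite hqp; exact: tangent_mulmx.
have push2 Y : tangent N q Y -> tangent M p (W2 *m Y).
  by rewrite hpq; exact: tangent_mulmx.
have retract X : tangent M p X -> W2 *m (W1 *m X) = X.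
  exact: tangent_retraction.
have adjoint X Y : tangent M p X -> fisher p X (W2 *m Y) = fisher q (W1 *m X) Y.
  move=> tX; apply: fisher_markov_adjoint => //; last exact: retract.
  - by have [] := subM _ hp.
  - by have [] := subN _ hq.
split; [|split].
- by move=> X Y tX _; exact: adjoint.
- exact: (cometric_adjoint push1 push2 adjoint).
- exact: (mulmx_orth_projector push2 retract adjoint).
Qed.
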